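(* Let $1<S\le N$, $L$ a band-width vector, $\dot W$ an $L$-admissible matrix, $W_\varepsilon=\mathrm{Id}+\varepsilon\dot W$, $k\in\mathbb N$, $\beta\in\Gamma$, $D_\beta=D_{k,\beta,L}$, $D_{-\beta}=\overline{D_\beta}=D_\beta^{-1}$, $P_{\varepsilon,\beta}=D_\beta W_\varepsilon$ (so $P_{\varepsilon,\beta}^*=W_\varepsilon D_{-\beta}$). Fix $\ell$ and $s_\ell$ with $\ell\in B_{s_\ell}$. Suppose that for $0<\varepsilon<\gamma$: $f^{(\ell)}_\varepsilon$ is a unit eigenvector of $P_{\varepsilon,\beta}$ with eigenvalue $\lambda^{(\ell)}_\varepsilon\to e^{-2\pi ik\beta_{s_\ell}}$; $\mu^{(\ell)}_\varepsilon$ satisfies $P^*_{\varepsilon,\beta}\mu^{(\ell)}_\varepsilon=\overline{\lambda^{(\ell)}_\varepsilon}\mu^{(\ell)}_\varepsilon$ and $\langle f^{(\ell)}_\varepsilon,\mu^{(\ell)}_\varepsilon\rangle=1$; and $f^{(\ell)}_\varepsilon\to f^{(\ell)}$, $\mu^{(\ell)}_\varepsilon\to f^{(\ell)}$ as $\varepsilon\to0$, where $f^{(\ell)}$ is a unit eigenvector of $D_\beta\hat W_L$. Then for each $j\in\{1,\dots,N\}\setminus B_{s_\ell}$, with $s_j$ such that $j\in B_{s_j}$, $$\lim_{\varepsilon\to0}\frac{(\mu^{(\ell)}_\varepsilon)_j-(f^{(\ell)})_j}{\varepsilon}=\lim_{\varepsilon\to0}\frac{(\mu^{(\ell)}_\varepsilon)_j}{\varepsilon}=\frac{1}{e^{2\pi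 ik\beta_{s_\ell}}-e^{2\pi ik\beta_{s_j}}}\bigl(\dot WD_{-\beta}f^{(\ell)}\bigr)_j.$$
   Context: A band-width vector is $L=(L_1,\dots,L_S)$ of positive integers with $\sum_sL_s=N$; $N_0=0$, $N_s=N_{s-1}+L_s$, $B_s=\{j:N_{s-1}<j\le N_s\}$. $D_{k,\beta,L}$ is the diagonal matrix with $j$-th entry $e^{-2\pi ik\beta_s}$ for $j\in B_s$. $\dot W$ is $L$-admissible if it is real symmetric and (1) $\dot W_{ij}\ge0$ for $i\ne j$, $\sum_j\dot W_{ij}=0$ for all $i$; (2) $\dot W$ has $N$ distinct eigenvalues; (3) each $\hat W_s=(\dot W_{jk})_{j,k\in B_s}$ has $L_s$ distinct eigenvalues. $\hat W_L$ is block diagonal with blocks $\hat W_s$. $\Gamma=\{\beta\in\mathbb R^S: e^{-2\pi ik\beta_{s_1}}\neq e^{-2\pi ik\beta_{s_2}}\text{ for all }k\ne0,\ s_1\ne s_2\}$. $\langle v,w\rangle=\sum_jv_j\overline{w_j}$; $P^*$ is the conjugate transpose. *)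

From HB Require Import structures.
From mathcomp Require Import all_boot all_order all_algebra.
From mathcomp Require Import complex.
From mathcomp Require Import all_classical all_reals all_analysis.
Set Implicit Arguments. Unset Strict Implicit. Unset Printing Implicit Defensive.
Import Order.TTheory GRing.Theory Num.Theory.
Import numFieldNormedType.Exports.
Local Open Scope ring_scope.
Local Open Scope complex_scope.

(* Topology on R[i]: the (pseudo)metric of the complex modulus, copied from
   the generic numFieldType instance on the regular alias R[i]^o. *)
HB.instance Definition _ (R : realType) :=
  PseudoPointedMetric.copy R[i] (R[i])^o.

Section Defs.
Variable R : realType.

Definition expi (x : R) : R[i] := (cos x +i* sin x).

(* Indices are 0-based: 'I_N stands for {1..N}, 'I_S for {1..S}.
   N_{s-1} = \sum_(t < s) L_t, and j is in B_s iff N_{s-1} <= j < N_s. *)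
Definition bandwidth (S N : nat) (L : 'I_S -> nat) : Prop :=
  (forall s, (0 < L s)%N) /\ (\sum_(s < S) L s)%N = N.

Definition inblock (S N : nat) (L : 'I_S -> nat) (s : 'I_S) (j : 'I_N) : bool :=
  ((\sum_(t < S | (t < s)%N) L t)%N <= j)%N && (j < \sum_(t < S | (t <= s)%N) L t)%N.

Definition block (S N : nat) (L : 'I_S -> nat) (s : 'I_S) : {set 'I_N} :=
  [set j | inblock L s j].

Definition Dmat (S N : nat) (L : 'I_S -> nat) (k : nat) (beta : 'I_S -> R)
  : 'M[R[i]]_N :=
  \matrix_(i, j) if i == j then
     (match [pick s | inblock L s i] with
      | Some s => expi (- (2 * pi * k%:R * beta s))
      | None => 1 end)
   else 0.

Definition Wblock (S N : nat) (L : 'I_S -> nat) (W : 'M[R]_N) (s : 'I_S)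
  : 'M[R]_#|block N L s| :=
  \matrix_(a, b) W (enum_val a) (enum_val b).

Definition WhatL (S N : nat) (L : 'I_S -> nat) (W : 'M[R]_N) : 'M[R]_N :=
  \matrix_(i, j) if [exists s, inblock L s i && inblock L s j] then W i j else 0.

Definition admissible (S N : nat) (L : 'I_S -> nat) (W : 'M[R]_N) : Prop :=
  [/\ W^T = W,
      (forall i j, i != j -> 0 <= W i j),
      (forall i, \sum_j W i j = 0),
      (exists e : 'I_N -> R, injective e /\ forall i, eigenvalue W (e i)) &
      (forall s, exists e : 'I_#|block N L s| -> R,
           injective e /\ forall a, eigenvalue (Wblock L W s) (e a))].

Definition Gamma (S : nat) (beta : 'I_S -> R) : Prop :=
  forall (k : int), k != 0 -> forall s1 s2 : 'I_S, s1 != s2 ->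
    expi (- (2 * pi * k%:~R * beta s1)) != expi (- (2 * pi * k%:~R * beta s2)).

Definition cmx (m n : nat) (A : 'M[R]_(m, n)) : 'M[R[i]]_(m, n) :=
  map_mx (fun x => x%:C) A.

Definition ctrans (m n : nat) (A : 'M[R[i]]_(m, n)) : 'M[R[i]]_(n, m) :=
  (map_mx (@conjc R) A)^T.

Definition cinner (n : nat) (v w : 'cV[R[i]]_n) : R[i] :=
  \sum_j v j 0 * conjc (w j 0).

Definition unit_vec (n : nat) (v : 'cV[R[i]]_n) : Prop := cinner v v = 1.

End Defs.

(* Reading off the j-th row of P_eps^* mu_eps = conj(lam_eps) mu_eps, where
   P_eps^* = (Id + eps W) D_{-beta}, gives
     mu_eps_j * (conj(lam_eps) - e^{2 pi i k beta_{s_j}}) = eps * (W D_{-beta} mu_eps)_j.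
   The factor on the left tends to e^{2 pi i k beta_{s_l}} - e^{2 pi i k beta_{s_j}},
   which is nonzero because beta is in Gamma, so dividing by eps gives the second
   limit.  In particular mu_eps_j = O(eps) tends to 0, hence f0_j = 0 and the two
   limits coincide. *)

From HB Require Import structures.
From mathcomp Require Import all_boot all_order all_algebra.
From mathcomp Require Import complex.
From mathcomp Require Import all_classical all_reals all_analysis.
Set Implicit Arguments. Unset Strict Implicit. Unset Printing Implicit Defensive.
Import Order.TTheory GRing.Theory Num.Theory.
Import numFieldNormedType.Exports.
Local Open Scope ring_scope.
Local Open Scope complex_scope.
Local Open Scope classical_set_scope.

Section Blocks.
Variables (S N : nat) (L : 'I_S -> nat).

Lemma block_end_le_start (s t : 'I_S) : (s < t)%N ->
  (\sum_(u < S | (u <= s)%N) L u <= \sum_(u < S | (u < t)%N) L u)%N.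
Proof.
move=> lt_st; rewrite big_mkcond [leqRHS]big_mkcond /=.
apply: leq_sum => u _; case: ifP => // le_us.
by rewrite (leq_ltn_trans le_us lt_st).
Qed.

Lemma inblock_uniq (s t : 'I_S) (j : 'I_N) :
  inblock L s j -> inblock L t j -> s = t.
Proof.
rewrite /inblock => /andP[s_lo s_hi] /andP[t_lo t_hi].
case: (ltngtP s t) => [lt_st|lt_ts|/val_inj //].
  by have := leq_trans s_hi (leq_trans (block_end_le_start lt_st) t_lo); rewrite ltnn.
by have := leq_trans t_hi (leq_trans (block_end_le_start lt_ts) s_lo); rewrite ltnn.
Qed.

End Blocks.

Lemma conjc_expi (R : realType) (x : R) : conjc (expi x) = expi (- x).
Proof. by rewrite /expi cosN sinN. Qed.

Lemma Gamma_expi_neq (R : realType) (S : nat) (beta : 'I_S -> R) (k : nat)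
    (s1 s2 : 'I_S) :
  Gamma beta -> (0 < k)%N -> s1 != s2 ->
  expi (2 * pi * k%:R * beta s1) != expi (2 * pi * k%:R * beta s2).
Proof.
move=> HGamma k_gt0 s12.
have k_neq0 : k%:Z != 0 by apply: contraTneq k_gt0 => -[->].
have := HGamma k%:Z k_neq0 s1 s2 s12; rewrite pmulrn.
by apply: contra => /eqP E; rewrite -!conjc_expi E.
Qed.

Section PhaseMatrix.
Variables (R : realType) (S N : nat) (L : 'I_S -> nat) (k : nat).

Definition Dentry (beta : 'I_S -> R) (i : 'I_N) : R[i] :=
  match [pick s | inblock L s i] with
  | Some s => expi (- (2 * pi * k%:R * beta s))
  | None => 1
  end.

Lemma Dmat_diag (beta : 'I_S -> R) :
  Dmat N L k beta = diag_mx (\row_i Dentry beta i).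
Proof. by apply/matrixP => a b; rewrite !mxE; case: eqP => // ->; rewrite eqxx. Qed.

Lemma Dentry_inblock (beta : 'I_S -> R) (s : 'I_S) (j : 'I_N) :
  inblock L s j -> Dentry beta j = expi (- (2 * pi * k%:R * beta s)).
Proof.
move=> js; rewrite /Dentry; case: pickP => [t jt|/(_ s)]; last by rewrite js.
by rewrite (inblock_uniq jt js).
Qed.

Lemma conjc_Dentry (beta : 'I_S -> R) (j : 'I_N) :
  conjc (Dentry beta j) = Dentry (fun s => - beta s) j.
Proof.
rewrite /Dentry; case: pickP => [s _|_]; last by rewrite rmorph1.
by rewrite conjc_expi mulrN.
Qed.

Lemma ctransM m n p (A : 'M[R[i]]_(m, n)) (B : 'M[R[i]]_(n, p)) :
  ctrans (A *m B) = ctrans B *m ctrans A.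
Proof. by rewrite /ctrans map_mxM trmx_mul. Qed.

Lemma ctrans_Dmat (beta : 'I_S -> R) :
  ctrans (Dmat N L k beta) = Dmat N L k (fun s => - beta s).
Proof.
rewrite !Dmat_diag; apply/matrixP => a b; rewrite !mxE eq_sym.
case: eqP => [->|_]; last by rewrite !mulr0n conjc0.
by rewrite !mulr1n conjc_Dentry.
Qed.

Lemma ctrans_perturbation (W : 'M[R]_N) (e : R) : W^T = W ->
  ctrans (1%:M + e%:C *: cmx W) = 1%:M + e%:C *: cmx W.
Proof.
move=> Wsym; apply/matrixP => a b.
rewrite !mxE rmorphD rmorphM rmorph_nat /= !oppr0 eq_sym.
by rewrite -{1}Wsym mxE.
Qed.

Lemma adjoint_eigen_entry (beta : 'I_S -> R) (W : 'M[R]_N) (e : R)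
    (m : 'cV[R[i]]_N) (c : R[i]) (s : 'I_S) (j : 'I_N) :
  W^T = W -> inblock L s j ->
  ctrans (Dmat N L k beta *m (1%:M + e%:C *: cmx W)) *m m = c *: m ->
  m j 0 * (c - expi (2 * pi * k%:R * beta s))
    = e%:C * (cmx W *m Dmat N L k (fun t => - beta t) *m m) j 0.
Proof.
move=> Wsym js; rewrite ctransM ctrans_perturbation // ctrans_Dmat.
rewrite mulmxDl mul1mx mulmxDl -!scalemxAl => /matrixP/(_ j 0).
rewrite [in X in X + _]Dmat_diag mul_diag_mx !mxE (Dentry_inblock _ js) mulrN opprK.
by move=> E; rewrite mulrBr mulrC -E [m j 0 * _]mulrC addrAC subrr add0r.
Qed.

End PhaseMatrix.

Section Limits.
Variables (R : realType) (T : Type) (F : set_system T).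
Context {FF : Filter F}.
Implicit Types (a g h v : T -> R[i]).

Lemma cvg_conjc a (u : R[i]) :
  a x @[x --> F] --> u -> conjc (a x) @[x --> F] --> conjc u.
Proof.
move=> /(@cvgrPdist_lt _ (R[i]^o)) au.
apply/(@cvgrPdist_lt _ (R[i]^o)) => e e0.
by near do rewrite -normcJ rmorphB /= !conjcK; apply: au.
Unshelve. all: by end_near.
Qed.

Lemma cvg_mx_entry (K : topologicalType) m n (A : T -> 'M[K]_(m, n))
    (B : 'M[K]_(m, n)) i j :
  A x @[x --> F] --> B -> A x i j @[x --> F] --> B i j.
Proof.
move=> AB U BU; suff : nbhs B [set M : 'M[K]_(m, n) | U (M i j)] by move/AB.
exists (fun p q => if (p == i) && (q == j) then U else setT).
  move=> p q; case: ifP => [/andP[/eqP-> /eqP->] //|_]; exact: filterT.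
by move=> M /(_ i j); rewrite !eqxx.
Qed.

Lemma cvg_mulmx_entry m n p (A : 'M[R[i]]_(m, n)) (B : T -> 'M[R[i]]_(n, p))
    (B0 : 'M[R[i]]_(n, p)) i j :
  B x @[x --> F] --> B0 -> (A *m B x) i j @[x --> F] --> (A *m B0) i j.
Proof.
move=> BB0; rewrite mxE; under eq_cvg do rewrite mxE.
apply: cvg_big => [|l _].
  exact: (@pseudometric_normed_Zmodule.add_continuous _ (R[i]^o)).
apply: (@cvgM _ _ _ _ (fun=> A i l) (fun x => B x l j)).
  exact: cvg_cst.
exact: cvg_mx_entry.
Qed.

Lemma cvg_ratio a g h v (g0 v0 : R[i]) : g0 != 0 ->
  g x @[x --> F] --> g0 -> v x @[x --> F] --> v0 ->
  (\forall x \near F, h x != 0 /\ a x * g x = h x * v x) ->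
  (a x / h x) @[x --> F] --> g0^-1 * v0.
Proof.
move=> g0_neq0 gg0 vv0 agh.
have g_neq0 := @cvgr_neq0 _ (R[i]^o) _ _ _ _ _ gg0 g0_neq0.
apply: (@cvg_trans _ ((fun x => (g x)^-1 * v x) @ F)).
  apply: near_eq_cvg; near=> x.
  have [hx0 hx] : h x != 0 /\ a x * g x = h x * v x by near: x.
  have gx0 : g x != 0 by near: x; exact: g_neq0.
  by rewrite /= -(mulfK gx0 (a x)) hx [h x * _]mulrC mulrAC mulfK // mulrC.
exact: (@cvgM _ _ _ _ _ _ _ _ (@cvgV _ _ _ _ _ _ g0_neq0 gg0) vv0).
Unshelve. all: by end_near.
Qed.

Lemma ratio_cvg_num_eq0 {PF : ProperFilter F} a h (a0 c : R[i]) :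
  a x @[x --> F] --> a0 -> h x @[x --> F] --> 0 ->
  (a x / h x) @[x --> F] --> c -> (\forall x \near F, h x != 0) -> a0 = 0.
Proof.
move=> aa0 h0 ac h_neq0.
have a_cvg0 : a x @[x --> F] --> 0.
  have ahh : (a x / h x * h x) @[x --> F] --> 0.
    by rewrite -(mulr0 c); exact: (@cvgM _ _ _ _ _ _ _ _ ac h0).
  apply: cvg_trans ahh; apply: near_eq_cvg; near=> x.
  by rewrite /= mulfVK //; near: x.
exact: (@cvg_unique R[i] (@norm_hausdorff _ (R[i]^o)) _ _ _ _ aa0 a_cvg0).
Unshelve. all: by end_near.
Qed.

End Limits.

Lemma real_complex_continuous (R : realType) : continuous (fun x : R => x%:C).
Proof.
move=> a; apply/(@cvgrPdist_lt _ (R[i]^o)) => _ /[dup] /gtr0_real/complex_realP[r ->].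
rewrite ltcE /= => /andP[_ r_gt0].
near=> x; rewrite -rmorphB normc_def /= expr0n addr0 sqrtr_sqr ltcR.
by near: x; exact: (@nbhsx_ballx _ R^o a r r_gt0).
Unshelve. all: by end_near.
Qed.

Theorem proposition4p9 (R : realType) (S N : nat) (L : 'I_S -> nat)
  (Wd : 'M[R]_N) (k : nat) (beta : 'I_S -> R) (gamma : R)
  (lam : R -> R[i]) (f mu : R -> 'cV[R[i]]_N) (f0 : 'cV[R[i]]_N)
  (l : 'I_N) (sl : 'I_S) :
  (1 < S)%N -> (S <= N)%N ->
  bandwidth N L -> admissible L Wd ->
  (0 < k)%N -> Gamma beta ->
  inblock L sl l ->
  0 < gamma ->
  let D := Dmat N L k beta in
  let Dm := Dmat N L k (fun s => - beta s) in
  let P := fun eps : R => D *m (1%:M + (eps%:C) *: cmx Wd) in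
  (forall eps, 0 < eps < gamma ->
     [/\ unit_vec (f eps),
         P eps *m f eps = lam eps *: f eps,
         ctrans (P eps) *m mu eps = conjc (lam eps) *: mu eps &
         cinner (f eps) (mu eps) = 1]) ->
  lam x @[x --> 0^'+] --> expi (- (2 * pi * k%:R * beta sl)) ->
  f x @[x --> 0^'+] --> f0 ->
  mu x @[x --> 0^'+] --> f0 ->
  unit_vec f0 ->
  (exists lam0 : R[i], (D *m cmx (WhatL L Wd)) *m f0 = lam0 *: f0) ->
  forall (j : 'I_N) (sj : 'I_S), ~~ inblock L sl j -> inblock L sj j ->
  let c := (expi (2 * pi * k%:R * beta sl) - expi (2 * pi * k%:R * beta sj))^-1
           * (cmx Wd *m Dm *m f0) j 0 in
  ((mu x j 0 - f0 j 0) / x%:C) @[x --> 0^'+] --> c /\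
  (mu x j 0 / x%:C) @[x --> 0^'+] --> c.
Proof.
move=> _ _ _ [Wsym _ _ _ _] k_gt0 HGamma _ gamma_gt0 D Dm P eigen lam_cvg _ mu_cvg
  _ _ j sj not_lj sj_j c.
have gap_neq0 : expi (2 * pi * k%:R * beta sl) - expi (2 * pi * k%:R * beta sj) != 0.
  by rewrite subr_eq0 Gamma_expi_neq //; apply: contraNneq not_lj => ->.
have lam_conj_cvg : conjc (lam x) @[x --> 0^'+] --> expi (2 * pi * k%:R * beta sl).
  by rewrite -[X in _ --> X]conjcK conjc_expi; exact: cvg_conjc.
have G_cvg : (conjc (lam x) - expi (2 * pi * k%:R * beta sj)) @[x --> 0^'+] -->
    expi (2 * pi * k%:R * beta sl) - expi (2 * pi * k%:R * beta sj).
  exact: (@cvgB _ (R[i]^o) _ _ _ (fun x => conjc (lam x))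
    (fun=> expi (2 * pi * k%:R * beta sj)) _ _ lam_conj_cvg (cvg_cst _)).
have V_cvg : (cmx Wd *m Dm *m mu x) j 0 @[x --> 0^'+] --> (cmx Wd *m Dm *m f0) j 0.
  exact: cvg_mulmx_entry.
have adjoint_eq : \forall x \near 0^'+, x%:C != 0 /\
    mu x j 0 * (conjc (lam x) - expi (2 * pi * k%:R * beta sj))
    = x%:C * (cmx Wd *m Dm *m mu x) j 0.
  near=> x.
  have x_gt0 : 0 < x by near: x; exact: nbhs_right_gt.
  have x_lt : x < gamma by near: x; exact: nbhs_right_lt.
  have [_ _ adj _] := eigen x (introT andP (conj x_gt0 x_lt)).
  split; first by rewrite eq_complex /= eqxx andbT gt_eqF.
  exact: adjoint_eigen_entry adj.
have ratio_cvg : (mu x j 0 / x%:C) @[x --> 0^'+] --> c.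
  exact: cvg_ratio gap_neq0 G_cvg V_cvg adjoint_eq.
have f0j : f0 j 0 = 0.
  apply: (ratio_cvg_num_eq0 (cvg_mx_entry mu_cvg) _ ratio_cvg).
  - exact: (cvg_at_right_filter (@real_complex_continuous R 0)).
  - by apply: filterS adjoint_eq => x [].
by rewrite f0j; under eq_cvg do rewrite subr0; split.
Unshelve. all: by end_near.
Qed.
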